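(* The assignment $c\mapsto[\![c]\!]_{op}$ is a morphism of props $\mathsf{ACirc}\to\mathsf{Traj}$; that is, for all circuits $c,d$: $[\![c;d]\!]_{op}=[\![c]\!]_{op};[\![d]\!]_{op}$ whenever $c;d$ is defined, $[\![c\oplus d]\!]_{op}=[\![c]\!]_{op}\oplus[\![d]\!]_{op}$, and identities and symmetries are sent to the identities and symmetries of $\mathsf{Traj}$.
   Context: Fix a field $k$. Circuits are terms built from generators, each with a sort $(n,m)$: copier $\Delta:(1,2)$, discard $!:(1,0)$, amplifier $\mathsf{s}_r:(1,1)$ ($r\in k$), register $\mathsf{x}:(1,1)$, adder $+:(2,1)$, zero $0:(0,1)$, one $\mathbf{1}:(0,1)$; mirror images $\Delta^{op}:(2,1)$, $!^{op}:(0,1)$, $\mathsf{s}_r^{op}:(1,1)$, $\mathsf{x}^{op}:(1,1)$, $+^{op}:(1,2)$, $0^{op}:(1,0)$, $\mathbf{1}^{op}:(1,0)$; $\mathrm{id}_0:(0,0)$, $\mathrm{id}_1:(1,1)$, $\mathrm{sw}:(2,2)$; closed under sequential composition $c;d$ (matching middle sort) and parallel composition $c\oplus d$ (sorts add). Modulo symmetric monoidal category laws they form the prop $\mathsf{ACirc}$. Operational semantics: a state is a circuit with a value of $k$ in each register ($\mathsf x$, $\mathsf x^{op}$); the initial state $c_0$ stores $0$ everywhere. Transitions $t\vdash c\xrightarrow[w]{v}c'$ (time $t\in\mathbb Z$, left label $v\in k^n$, right label $w\in k^m$) are generated by, for all $t$ and $a,b\in k$: $\Delta$: left $a$, right $(a,a)$;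 $!$: left $a$, right $\bullet$; $+$: left $(a,b)$, right $a+b$; $0$: left $\bullet$, right $0$; $\mathsf s_r$: left $a$, right $ra$; $\mathsf x$ storing $b$: left $a$, right $b$, then stores $a$; $\mathbf 1$: left $\bullet$, right $1$ if $t=0$, $0$ if $t\neq0$; mirrored generators: same rules with left/right labels exchanged; $\mathrm{id}_1$: $a/a$; $\mathrm{sw}$: $(a,b)/(b,a)$; $\mathrm{id}_0$: $\bullet/\bullet$; for $;$ the components synchronise at the same time on the shared middle label, for $\oplus$ they move at the same time with labels concatenated. A computation starting at time $t\le0$ is a sequence of transitions $t\vdash c_0\xrightarrow[v_t]{u_t}c_1$, $t+1\vdash c_1\xrightarrow[v_{t+1}]{u_{t+1}}c_2,\dots$ from the initial state. An $(n,m)$-trajectory is a map $\sigma:\mathbb Z\to k^n\times k^m$ with some $j$ such that $\sigma(i)=(0,0)$ for all $i\le j$; write $\sigma=\langle\sigma_l,\sigma_r\rangle$. For sets $S$ of $(k',m)$-trajectories and $T$ of $(m,n)$-trajectories, $S;T=\{\langle\sigma_l,\tau_r\rangle:\sigma\in S,\tau\in T,\sigma_r=\tau_l\}$; $S_1\oplus S_2=\{\sigma_1\oplus\sigma_2\}$ with $(\sigma_1\oplus\sigma_2)(i)$ the componentwise stacking of $\sigma_1(i)$ and $\sigma_2(i)$. These form a prop $\mathsf{Traj}$ whose arrows $n\to m$ are sets of $(n,m)$-trajectories. $[\![c]\!]_{op}$ is the set of trajectories $\sigma$ associated to infinite computations of $c$: $\sigma(i)=(u_i,v_i)$ for $i\ge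 t$ and $(0,0)$ for $i<t$, where $t$ is the starting time. *)

From HB Require Import structures.
From mathcomp Require Import all_boot all_order all_algebra.
Set Implicit Arguments. Unset Strict Implicit. Unset Printing Implicit Defensive.
Import Order.TTheory GRing.Theory Num.Theory.
Local Open Scope ring_scope.

Section ACirc.
Variable F : fieldType.

(* Circuit terms of sort (n,m).  Registers carry their stored value, so the
   same type also represents operational states. *)
Inductive circ : nat -> nat -> Type :=
| Copy : circ 1 2
| Discard : circ 1 0
| Amp : F -> circ 1 1
| Reg : F -> circ 1 1
| Add : circ 2 1
| Zero : circ 0 1
| One : circ 0 1
| CopyOp : circ 2 1
| DiscardOp : circ 0 1
| AmpOp : F -> circ 1 1
| RegOp : F -> circ 1 1
| AddOp : circ 1 2
| ZeroOp : circ 1 0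
| OneOp : circ 1 0
| Id0 : circ 0 0
| Id1 : circ 1 1
| Sw : circ 2 2
| Seq : forall n m l, circ n m -> circ m l -> circ n l
| Par : forall n1 m1 n2 m2, circ n1 m1 -> circ n2 m2 -> circ (n1 + n2) (m1 + m2).

Fixpoint reset n m (c : circ n m) : circ n m :=
  match c in circ n m return circ n m with
  | Reg _ => Reg 0
  | RegOp _ => RegOp 0
  | Seq _ _ _ c d => Seq (reset c) (reset d)
  | Par _ _ _ _ c d => Par (reset c) (reset d)
  | c => c
  end.

Fixpoint cid n : circ n n :=
  match n with
  | 0 => Id0
  | n'.+1 => Par Id1 (cid n')
  end.

Definition v1 (a : F) : 'rV[F]_1 := const_mx a.
Definition v2 (a b : F) : 'rV[F]_2 :=
  \row_(i < 2) (if (i : nat) == 0%N then a else b).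
Definition vnil : 'rV[F]_0 := 0.

Inductive step : forall n m, int -> circ n m -> 'rV[F]_n -> 'rV[F]_m -> circ n m -> Prop :=
| stCopy t a : step t Copy (v1 a) (v2 a a) Copy
| stDiscard t a : step t Discard (v1 a) vnil Discard
| stAmp t r a : step t (Amp r) (v1 a) (v1 (r * a)) (Amp r)
| stReg t b a : step t (Reg b) (v1 a) (v1 b) (Reg a)
| stAdd t a b : step t Add (v2 a b) (v1 (a + b)) Add
| stZero t : step t Zero vnil (v1 0) Zero
| stOne t : step t One vnil (v1 (if t == 0 then 1 else 0)) One
| stCopyOp t a : step t CopyOp (v2 a a) (v1 a) CopyOp
| stDiscardOp t a : step t DiscardOp vnil (v1 a) DiscardOp
| stAmpOp t r a : step t (AmpOp r) (v1 (r * a)) (v1 a) (AmpOp r)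
| stRegOp t b a : step t (RegOp b) (v1 b) (v1 a) (RegOp a)
| stAddOp t a b : step t AddOp (v1 (a + b)) (v2 a b) AddOp
| stZeroOp t : step t ZeroOp (v1 0) vnil ZeroOp
| stOneOp t : step t OneOp (v1 (if t == 0 then 1 else 0)) vnil OneOp
| stId0 t : step t Id0 vnil vnil Id0
| stId1 t a : step t Id1 (v1 a) (v1 a) Id1
| stSw t a b : step t Sw (v2 a b) (v2 b a) Sw
| stSeq t n m l (c c' : circ n m) (d d' : circ m l) u v w :
    step t c u v c' -> step t d v w d' -> step t (Seq c d) u w (Seq c' d')
| stPar t n1 m1 n2 m2 (c c' : circ n1 m1) (d d' : circ n2 m2) u1 w1 u2 w2 :
    step t c u1 w1 c' -> step t d u2 w2 d' ->
    step t (Par c d) (row_mx u1 u2) (row_mx w1 w2) (Par c' d').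

Definition trajfun n m := int -> 'rV[F]_n * 'rV[F]_m.
Definition is_traj n m (s : trajfun n m) : Prop :=
  exists j : int, forall i : int, i <= j -> s i = (0, 0).

Definition trajset n m := trajfun n m -> Prop.

Definition tseq k m n (S : trajset k m) (T : trajset m n) : trajset k n :=
  fun r => exists (s : trajfun k m) (t : trajfun m n),
    S s /\ T t /\ (forall i, (s i).2 = (t i).1) /\
    (forall i, r i = ((s i).1, (t i).2)).

Definition tpar n1 m1 n2 m2 (S1 : trajset n1 m1) (S2 : trajset n2 m2)
  : trajset (n1 + n2) (m1 + m2) :=
  fun r => exists (s1 : trajfun n1 m1) (s2 : trajfun n2 m2),
    S1 s1 /\ S2 s2 /\
    (forall i, r i = (row_mx (s1 i).1 (s2 i).1, row_mx (s1 i).2 (s2 i).2)).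

Definition tid n : trajset n n :=
  fun s => is_traj s /\ forall i, (s i).1 = (s i).2.

Definition tsym n m : trajset (n + m) (m + n) :=
  fun s => is_traj s /\
    forall i, (s i).2 = row_mx (rsubmx (s i).1) (lsubmx (s i).1).

Definition opsem n m (c : circ n m) : trajset n m :=
  fun sg => exists (t : int) (st : nat -> circ n m)
                   (u : nat -> 'rV[F]_n) (w : nat -> 'rV[F]_m),
    t <= 0 /\ st 0%N = reset c /\
    (forall i : nat, step (t + i%:Z) (st i) (u i) (w i) (st i.+1)) /\
    (forall j : int, sg j = if t <= j then (u `|j - t|%N, w `|j - t|%N)
                            else (0, 0)).

End ACirc.

(* A computation of c;d is a pair of computations of c and d that run in lockstep
   and agree on the middle boundary, and a computation of c(+)d is a stacked pair.
   Conversely two such computations glue together, except that they may start at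
   different times t1, t2 <= 0.  At every time other than 0 (when the constant 1
   fires) the initial state, fed zeros, emits zeros and stays initial; so a
   computation whose trajectory vanishes before its start can be started at any
   earlier time, in particular at min t1 t2.  Identities and the symmetry have no
   state, so their computations are the trajectories that obey the wiring at every
   time. *)
From mathcomp Require Import all_boot all_order all_algebra.
From mathcomp Require Import zify.
From Stdlib Require Import Eqdep_dec ClassicalEpsilon FunctionalExtensionality PropExtensionality.
Import Order.TTheory GRing.Theory.
Local Open Scope ring_scope.
Set Implicit Arguments. Unset Strict Implicit.

Lemma int_ind_from (t : int) (P : int -> Prop) :
  P t -> (forall j, t <= j -> P j -> P (j + 1)) -> forall j, t <= j -> P j.
Proof.
move=> Pt PS j le_tj; have [k ->] : exists k : nat, j = t + k by exists (absz (j - t)); lia.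
elim: k {le_tj} => [|k IHk]; first by rewrite addr0.
by rewrite -addn1 PoszD addrA; apply: PS => //; lia.
Qed.

Lemma nat_existT_inj (P : nat -> Type) n (x y : P n) :
  existT P n x = existT P n y -> x = y.
Proof. exact: inj_pair2_eq_dec (@eq_comparable nat) P n x y. Qed.
Arguments nat_existT_inj {P n x y}.

Section OperationalSemantics.
Variable F : fieldType.

Lemma trajset_ext n m (S T : trajset F n m) : (forall s, S s <-> T s) -> S = T.
Proof.
by move=> eqST; apply: functional_extensionality => s; apply: propositional_extensionality.
Qed.

Lemma v2_row_mx (a b : F) : v2 a b = row_mx (v1 a) (v1 b).
Proof.
by apply/rowP => k; rewrite !mxE; case: splitP => j ->; rewrite !mxE ?ord1.
Qed.

Lemma rV1_v1 (x : 'rV[F]_1) : x = v1 (x 0 0).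
Proof. by apply/rowP => k; rewrite !mxE ord1. Qed.

Definition step_inv t n m (C : circ F n m) : 'rV[F]_n -> 'rV[F]_m -> circ F n m -> Prop :=
  match C in circ _ n m return 'rV[F]_n -> 'rV[F]_m -> circ F n m -> Prop with
  | Id0 => fun _ _ C' => C' = Id0 F
  | Id1 => fun u w C' => u = w /\ C' = Id1 F
  | Sw => fun u w C' => (exists a b, u = v2 a b /\ w = v2 b a) /\ C' = Sw F
  | Seq _ _ _ c d => fun u w C' =>
      exists c' d' v, [/\ C' = Seq c' d', step t c u v c' & step t d v w d']
  | Par _ _ _ _ c d => fun u w C' =>
      exists c' d', [/\ C' = Par c' d', step t c (lsubmx u) (lsubmx w) c'
                      & step t d (rsubmx u) (rsubmx w) d']
  | _ => fun _ _ _ => True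
  end.

Lemma stepP t n m (C : circ F n m) u w C' : step t C u w C' -> step_inv t C u w C'.
Proof.
case=> //= [t' a b|t' n1 m1 l c c' d d' u1 v w1 stc std
            |t' n1 m1 n2 m2 c c' d d' u1 w1 u2 w2 stc std].
- by split=> //; exists a, b.
- by exists c', d', v.
- by exists c', d'; rewrite !row_mxKl !row_mxKr.
Qed.

Lemma Seq_inj n m l (c c' : circ F n m) (d d' : circ F m l) :
  Seq c d = Seq c' d' -> c = c' /\ d = d'.
Proof. by case=> /nat_existT_inj/nat_existT_inj-> /nat_existT_inj/nat_existT_inj->. Qed.

Lemma Par_inj n1 m1 n2 m2 (c c' : circ F n1 m1) (d d' : circ F n2 m2) :
  Par c d = Par c' d' -> c = c' /\ d = d'.
Proof. by case=> /nat_existT_inj/nat_existT_inj-> /nat_existT_inj/nat_existT_inj->. Qed.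

Definition run_from n m t (C : circ F n m) (sg : trajfun F n m) :=
  exists st : int -> circ F n m, st t = C /\
    forall j, t <= j -> step j (st j) (sg j).1 (sg j).2 (st (j + 1)).

Definition zero_before n m t (sg : trajfun F n m) := forall j, j < t -> sg j = (0, 0).

Lemma opsemP n m (c : circ F n m) sg :
  opsem c sg <-> exists t, [/\ t <= 0, zero_before t sg & run_from t (reset c) sg].
Proof.
split.
- case=> t [st [u [w [le_t0 [st0 [st_step sgE]]]]]].
  exists t; split=> // [j lt_jt|].
    by rewrite sgE; case: ifP => //; lia.
  exists (fun j => st (absz (j - t))); split=> [|j le_tj]; first by rewrite subrr.
  have -> : absz (j + 1 - t)%R = (absz (j - t)%R).+1 by lia.
  have := st_step (absz (j - t)); have -> : t + (absz (j - t))%:Z = j by lia.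
  by rewrite sgE le_tj.
- case=> t [le_t0 sg0 [st [stt st_step]]].
  exists t, (fun i : nat => st (t + i%:Z)), (fun i => (sg (t + i%:Z)).1),
    (fun i => (sg (t + i%:Z)).2).
  do 2!split=> //; first by rewrite addr0.
  split=> [i|j]; first by rewrite -(addn1 i) PoszD addrA; apply: st_step; lia.
  case: ifP => [le_tj|lt_jt]; last by apply: sg0; lia.
  have -> : t + (absz (j - t))%:Z = j by lia.
  by case: (sg j).
Qed.

Lemma run_from_ext n m t (C : circ F n m) sg sg' :
  (forall j, t <= j -> sg j = sg' j) -> run_from t C sg -> run_from t C sg'.
Proof.
move=> eq_sg [st [stt st_step]]; exists st; split=> // j le_tj.
by rewrite -eq_sg //; apply: st_step.
Qed.

Lemma v1_0 : v1 (0 : F) = 0. Proof. by []. Qed.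

Lemma v2_0 : v2 (0 : F) 0 = 0.
Proof. by apply/rowP => i; rewrite !mxE; case: ifP. Qed.

Lemma step_reset_zero n m (c : circ F n m) j : j != 0 -> step j (reset c) 0 0 (reset c).
Proof.
move=> j_neq0; elim: c => /= [||r|r||||||r|r|||||||
                              n' m' l c IHc d IHd|n1 m1 n2 m2 c IHc d IHd].
all: rewrite -?v1_0 -?v2_0.
- exact: stCopy.
- exact: stDiscard.
- by have := stAmp j r 0; rewrite mulr0.
- exact: stReg.
- by have := stAdd j (0 : F) 0; rewrite addr0.
- exact: stZero.
- by have := stOne F j; rewrite (negbTE j_neq0).
- exact: stCopyOp.
- exact: stDiscardOp.
- by have := stAmpOp j r 0; rewrite mulr0.
- exact: stRegOp.
- by have := stAddOp j (0 : F) 0; rewrite addr0.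
- exact: stZeroOp.
- by have := stOneOp F j; rewrite (negbTE j_neq0).
- exact: stId0.
- exact: stId1.
- exact: stSw.
- exact: stSeq IHc IHd.
- by have := stPar IHc IHd; rewrite !row_mx0.
Qed.

Lemma run_from_earlier n m (c : circ F n m) t t' sg :
  t' <= t -> t <= 0 -> zero_before t sg -> run_from t (reset c) sg ->
  run_from t' (reset c) sg.
Proof.
move=> le_t't le_t0 sg0 [st [stt st_step]].
exists (fun j => if j < t then reset c else st j); split=> [|j le_t'j].
  by case: ifP => // /negbT; rewrite -leNgt => ?; have -> : t' = t by lia.
case: ltP => [lt_jt|le_tj]; last by rewrite ifF; [apply: st_step|lia].
rewrite sg0 //=; case: ifP => [_|/negbT]; first by apply: step_reset_zero; lia.
rewrite -leNgt => le_tj1; have -> : j + 1 = t by lia.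
by rewrite stt; apply: step_reset_zero; lia.
Qed.

Lemma opsem_common_start n m n' m' (c : circ F n m) (d : circ F n' m') s r :
  opsem c s -> opsem d r -> exists t, [/\ t <= 0, zero_before t s, zero_before t r,
                                        run_from t (reset c) s & run_from t (reset d) r].
Proof.
case/opsemP=> t1 [le_t10 s0 run_c] /opsemP[t2 [le_t20 r0 run_d]].
exists (Order.min t1 t2).
have [le_t1 le_t2] : Order.min t1 t2 <= t1 /\ Order.min t1 t2 <= t2 by lia.
split; [lia | move=> j lt_j; apply: s0; lia | move=> j lt_j; apply: r0; lia | |].
  exact: run_from_earlier run_c.
exact: run_from_earlier run_d.
Qed.

Lemma run_from_Seq n m l t (c : circ F n m) (d : circ F m l) s r :
  run_from t c s -> run_from t d r -> (forall j, (s j).2 = (r j).1) ->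
  run_from t (Seq c d) (fun j => ((s j).1, (r j).2)).
Proof.
move=> [st1 [st1t st1_step]] [st2 [st2t st2_step]] sr.
exists (fun j => Seq (st1 j) (st2 j)); split=> [|j le_tj]; first by rewrite st1t st2t.
by apply: stSeq; [apply: st1_step | rewrite sr; apply: st2_step].
Qed.

Lemma run_from_Seq_inv n m l t (c : circ F n m) (d : circ F m l) sg :
  run_from t (Seq c d) sg -> exists v : int -> 'rV[F]_m,
    run_from t c (fun j => ((sg j).1, v j)) /\ run_from t d (fun j => (v j, (sg j).2)).
Proof.
case=> st [stt st_step].
pose is_Seq j := exists (c' : circ F n m) (d' : circ F m l), st j = Seq c' d'.
have st_Seq : forall j, t <= j -> is_Seq j.
  apply: int_ind_from => [|j le_tj [c' [d' stj]]]; first by exists c, d.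
  have := st_step j le_tj; rewrite stj => /stepP[c'' [d'' [v [st_j1 _ _]]]].
  by exists c'', d''.
have /choice[p stE] : forall j, exists p : circ F n m * circ F m l,
    t <= j -> st j = Seq p.1 p.2.
  move=> j; case: (boolP (t <= j)) => [/st_Seq[c' [d' stj]]|_]; first by exists (c', d').
  by exists (c, d).
have /choice[v v_step] : forall j, exists v, t <= j ->
    step j (p j).1 (sg j).1 v (p (j + 1)).1 /\ step j (p j).2 v (sg j).2 (p (j + 1)).2.
  move=> j; case: (boolP (t <= j)) => [le_tj|_]; last by exists 0.
  have := st_step j le_tj; rewrite (stE j) // (stE (j + 1)); last lia.
  by case/stepP=> c' [d' [v [/Seq_inj[-> ->] stc std]]]; exists v.
have [-> ->] : c = (p t).1 /\ d = (p t).2 by apply: Seq_inj; rewrite -stt stE.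
exists v; split; [exists (fun j => (p j).1) | exists (fun j => (p j).2)].
all: by split=> // j le_tj; case: (v_step j le_tj).
Qed.

Lemma run_from_Par n1 m1 n2 m2 t (c : circ F n1 m1) (d : circ F n2 m2) s r :
  run_from t c s -> run_from t d r ->
  run_from t (Par c d) (fun j => (row_mx (s j).1 (r j).1, row_mx (s j).2 (r j).2)).
Proof.
move=> [st1 [st1t st1_step]] [st2 [st2t st2_step]].
exists (fun j => Par (st1 j) (st2 j)); split=> [|j le_tj]; first by rewrite st1t st2t.
by apply: stPar; [apply: st1_step | apply: st2_step].
Qed.

Lemma run_from_Par_inv n1 m1 n2 m2 t (c : circ F n1 m1) (d : circ F n2 m2) sg :
  run_from t (Par c d) sg ->
  run_from t c (fun j => (lsubmx (sg j).1, lsubmx (sg j).2)) /\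
  run_from t d (fun j => (rsubmx (sg j).1, rsubmx (sg j).2)).
Proof.
case=> st [stt st_step].
pose is_Par j := exists (c' : circ F n1 m1) (d' : circ F n2 m2), st j = Par c' d'.
have st_Par : forall j, t <= j -> is_Par j.
  apply: int_ind_from => [|j le_tj [c' [d' stj]]]; first by exists c, d.
  have := st_step j le_tj; rewrite stj => /stepP[c'' [d'' [st_j1 _ _]]].
  by exists c'', d''.
have /choice[p stE] : forall j, exists p : circ F n1 m1 * circ F n2 m2,
    t <= j -> st j = Par p.1 p.2.
  move=> j; case: (boolP (t <= j)) => [/st_Par[c' [d' stj]]|_]; first by exists (c', d').
  by exists (c, d).
have [-> ->] : c = (p t).1 /\ d = (p t).2 by apply: Par_inj; rewrite -stt stE.
split; [exists (fun j => (p j).1) | exists (fun j => (p j).2)]; split=> // j le_tj.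
all: have := st_step j le_tj; rewrite (stE j) // (stE (j + 1)); last lia.
all: by case/stepP=> c' [d' [/Par_inj[<- <-] stc std]].
Qed.

Lemma opsem_Seq n m l (c : circ F n m) (d : circ F m l) :
  opsem (Seq c d) = tseq (opsem c) (opsem d).
Proof.
apply: trajset_ext => sg; split.
- case/opsemP=> t [le_t0 sg0 /run_from_Seq_inv[v [run_c run_d]]].
  (* [v] is arbitrary before [t], where [s] and [r] must vanish *)
  pose s j := if j < t then (0, 0) else ((sg j).1, v j).
  pose r j := if j < t then (0, 0) else (v j, (sg j).2).
  have sE j : t <= j -> s j = ((sg j).1, v j) by rewrite /s ltNge => ->.
  have rE j : t <= j -> r j = (v j, (sg j).2) by rewrite /r ltNge => ->.
  exists s, r; split; [|split; [|split]].
  + apply/opsemP; exists t; split=> // [j lt_jt|]; first by rewrite /s lt_jt.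
    by apply: run_from_ext run_c => j /sE.
  + apply/opsemP; exists t; split=> // [j lt_jt|]; first by rewrite /r lt_jt.
    by apply: run_from_ext run_d => j /rE.
  + by move=> j; rewrite /s /r; case: ifP.
  + by move=> j; rewrite /s /r; case: ifP => [/sg0->|_] //; case: (sg j).
- case=> s [r [op_s [op_r [sr sgE]]]].
  have [t [le_t0 s0 r0 run_c run_d]] := opsem_common_start op_s op_r.
  apply/opsemP; exists t; split=> // [j lt_jt|]; first by rewrite sgE s0 ?r0.
  by have := run_from_Seq run_c run_d sr; apply: run_from_ext => j _; rewrite sgE.
Qed.

Lemma opsem_Par n1 m1 n2 m2 (c : circ F n1 m1) (d : circ F n2 m2) :
  opsem (Par c d) = tpar (opsem c) (opsem d).
Proof.
apply: trajset_ext => sg; split.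
- case/opsemP=> t [le_t0 sg0 /run_from_Par_inv[run_c run_d]].
  exists (fun j => (lsubmx (sg j).1, lsubmx (sg j).2)),
         (fun j => (rsubmx (sg j).1, rsubmx (sg j).2)).
  split; [|split].
  + by apply/opsemP; exists t; split=> // [j /sg0->]; rewrite /= ?linear0.
  + by apply/opsemP; exists t; split=> // [j /sg0->]; rewrite /= ?linear0.
  + by move=> j /=; rewrite !hsubmxK; case: (sg j).
- case=> s [r [op_s [op_r sgE]]].
  have [t [le_t0 s0 r0 run_c run_d]] := opsem_common_start op_s op_r.
  apply/opsemP; exists t; split=> // [j lt_jt|]; first by rewrite sgE s0 ?r0 //= !row_mx0.
  by have := run_from_Par run_c run_d; apply: run_from_ext => j _; rewrite sgE.
Qed.

Lemma opsem_stateless n m (C : circ F n m) :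
  reset C = C -> (forall j u w C', step j C u w C' -> C' = C) ->
  (forall j, step j C 0 0 C) ->
  opsem C = fun sg => is_traj sg /\ forall j, step j C (sg j).1 (sg j).2 C.
Proof.
move=> resetC stay step0; apply: trajset_ext => sg; split.
- case/opsemP=> t [le_t0 sg0 [st [stt st_step]]]; rewrite resetC in stt.
  have stC : forall j, t <= j -> st j = C.
    apply: int_ind_from => // j le_tj stj.
    by have := st_step j le_tj; rewrite stj => /stay.
  split; first by exists (t - 1) => j le_j; apply: sg0; lia.
  move=> j; case: (ltP j t) => [/sg0->|le_tj]; first exact: step0.
  by have := st_step j le_tj; rewrite !stC //; lia.
- case=> [[j0 sg0] stepC]; apply/opsemP; exists (Order.min j0 0).
  split; [lia | move=> j lt_j; apply: sg0; lia |].
  by rewrite resetC; exists (fun _ => C).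
Qed.

Lemma step_Id0 j u w : step j (Id0 F) u w (Id0 F).
Proof. by rewrite (thinmx0 u) (thinmx0 w); apply: stId0. Qed.

Lemma step_Id1 j u w : step j (Id1 F) u w (Id1 F) <-> u = w.
Proof. by split=> [/stepP[]|<-] //; rewrite [u]rV1_v1; apply: stId1. Qed.

Lemma step_Sw j (u w : 'rV[F]_(1 + 1)) :
  step j (Sw F) u w (Sw F) <-> w = row_mx (rsubmx u) (lsubmx u).
Proof.
split=> [/stepP[[a [b [-> ->]]] _]|->]; first by rewrite !v2_row_mx row_mxKl row_mxKr.
rewrite -[u in step _ _ u]hsubmxK.
by rewrite [lsubmx u]rV1_v1 [rsubmx u]rV1_v1 -!v2_row_mx; apply: stSw.
Qed.

Lemma opsem_Id0 : opsem (Id0 F) = @tid F 0.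
Proof.
rewrite opsem_stateless //; [|by move=> j u w C' /stepP|by move=> j; apply: step_Id0].
apply: trajset_ext => sg; split=> -[tr _]; split=> // j; last exact: step_Id0.
by rewrite (thinmx0 (sg j).1) (thinmx0 (sg j).2).
Qed.

Lemma opsem_Id1 : opsem (Id1 F) = @tid F 1.
Proof.
rewrite opsem_stateless //; [|by move=> j u w C' /stepP[]|by move=> j; apply/step_Id1].
by apply: trajset_ext => sg; split=> -[tr e]; split=> // j; apply/step_Id1/e.
Qed.

Lemma opsem_Sw : opsem (Sw F) = @tsym F 1 1.
Proof.
rewrite opsem_stateless //; [|by move=> j u w C' /stepP[]|].
  by apply: trajset_ext => sg; split=> -[tr e]; split=> // j; apply/step_Sw/e.
by move=> j; apply/step_Sw; rewrite !linear0 row_mx0.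
Qed.

Lemma tpar_tid a b : tpar (@tid F a) (@tid F b) = @tid F (a + b).
Proof.
apply: trajset_ext => s; split.
- case=> s1 [s2 [[[j1 s10] e1] [[[j2 s20] e2] sE]]].
  split=> [|i]; last by rewrite sE /= e1 e2.
  by exists (Order.min j1 j2) => i le_i; rewrite sE s10 ?s20 /= ?row_mx0 //; lia.
- case=> [[j s0] e].
  exists (fun i => (lsubmx (s i).1, lsubmx (s i).2)),
         (fun i => (rsubmx (s i).1, rsubmx (s i).2)).
  split; [|split].
  + by split=> [|i /=]; [exists j => i /s0->; rewrite /= !linear0 | rewrite e].
  + by split=> [|i /=]; [exists j => i /s0->; rewrite /= !linear0 | rewrite e].
  + by move=> i /=; rewrite !hsubmxK; case: (s i).
Qed.

Lemma opsem_cid n : opsem (cid F n) = @tid F n.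
Proof.
elim: n => [|n IHn]; first exact: opsem_Id0.
by rewrite (opsem_Par (Id1 F) (cid F n)) IHn opsem_Id1 tpar_tid.
Qed.

End OperationalSemantics.

Theorem theorem1 (F : fieldType) :
  (forall (n m l : nat) (c : circ F n m) (d : circ F m l),
      opsem (Seq c d) = tseq (opsem c) (opsem d)) /\
  (forall (n1 m1 n2 m2 : nat) (c : circ F n1 m1) (d : circ F n2 m2),
      opsem (Par c d) = tpar (opsem c) (opsem d)) /\
  (forall n : nat, opsem (cid F n) = @tid F n) /\
  opsem (Id0 F) = @tid F 0 /\
  opsem (Id1 F) = @tid F 1 /\
  opsem (Sw F) = @tsym F 1 1.
Proof.
split; first exact: opsem_Seq.
split; first exact: opsem_Par.
split; first exact: opsem_cid.
split; first exact: opsem_Id0.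
split; first exact: opsem_Id1.
exact: opsem_Sw.
Qed.
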